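(* Let $d'$ be a positive integer and $\varepsilon,\gamma\in(0,1)$ with $d'\ge\left(\frac12\left\lceil\frac{1}{2\varepsilon+\gamma}\right\rceil\right)^{1/\gamma}$, and let $p$ be the smallest prime larger than ${d'}^{2\varepsilon+\gamma}$. Then for every vector $\mathbf{x}'\in\mathbb{R}^{d'}$ with at most ${d'}^{\varepsilon}$ non-zero entries there exists $h_\star\in\mathcal H_{d',2\varepsilon+\gamma}$ such that $h_\star(i)\ne h_\star(j)$ for all $i\ne j$ with $x'_i\ne0\ne x'_j$.
   Context: For $d'$ and $\varepsilon'>0$: let $p$ be the smallest prime larger than ${d'}^{\varepsilon'}$ and $n=\lceil 1/\varepsilon'\rceil$; for $i\in[d']$ let $\mathrm{base}_p(i)\in\{0,\dots,p-1\}^n$ be the $n$-digit base-$p$ representation of $i$, with $j$-th digit $\mathrm{base}_p(i)_j$. For $a\in[p]$ define $h_a:[d']\to[p]$ by $h_a(i)=a+\sum_{j=1}^n a^j\,\mathrm{base}_p(i)_j \bmod p$, and $\mathcal H_{d',\varepsilon'}=\{h_a: a\in[p]\}$. Here $\varepsilon'=2\varepsilon+\gamma$. *)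

From HB Require Import structures.
From mathcomp Require Import all_boot all_order all_algebra.
From mathcomp Require Import all_classical all_reals all_analysis.

Import Order.TTheory GRing.Theory Num.Theory.
Local Open Scope ring_scope.

Definition ceil_nat (R : realType) (t : R) : nat := `|Num.ceil t|%N.

Definition smallest_prime_above (R : realType) (p : nat) (t : R) : Prop :=
  [/\ prime p, t < p%:R & forall q : nat, prime q -> t < q%:R -> (p <= q)%N].

Definition base_digit (p k j : nat) : nat := (k %/ p ^ j.-1) %% p.

(* h_a : [d] -> [p], h_a(i) = a + sum_{j=1}^n a^j base_p(i)_j mod p,
   with n = ceil(1/eps'), [d] = {1..d} encoded as i : 'I_d standing for i+1. *)
Definition hashH (R : realType) (d : nat) (eps' : R) (p a : nat) : 'I_d -> nat :=
  fun i => ((a + \sum_(1 <= j < (ceil_nat R (1 / eps')).+1)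
                 a ^ j * base_digit p i.+1 j) %% p)%N.

(* Membership in the family H_{d,eps'} = { h_a : a in [p] } where p is
   (supplied as) the smallest prime above d^eps'. *)
Definition in_hfam (R : realType) (d : nat) (eps' : R) (p : nat)
  (h : 'I_d -> nat) : Prop :=
  exists2 a : nat, (a < p)%N & h = hashH R d eps' p a.

From HB Require Import structures.
From mathcomp Require Import all_boot all_order all_algebra.
From mathcomp Require Import all_classical all_reals all_analysis.
From mathcomp Require Import zify lra.
Import Order.TTheory GRing.Theory Num.Theory.
Local Open Scope ring_scope.

(* Over F_p, h_a(i) - h_a(j) is the value at a of X (Q_i - Q_j), where Q_m
   is the polynomial whose coefficients are the n base-p digits of m.  For
   distinct i, j < p^n this polynomial is non-zero of degree at most n.  The
   product of these polynomials over the pairs i < j of the support S has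
   degree at most n |S|^2 / 2 < p, so it does not vanish at some a in F_p,
   and h_a is injective on S.  The bounds d < p^n and n |S|^2 < 2 p come from
   p > d^(2 eps + gam), |S| <= d^eps and n / 2 <= d^gam. *)

Lemma ceil_nat_ge (R : realType) (t : R) : 0 < t -> t <= (ceil_nat R t)%:R.
Proof.
move=> t_gt0; rewrite /ceil_nat natr_absz ger0_norm ?ceil_ge //.
by rewrite ceil_ge0 (lt_trans _ t_gt0) // ltrN10.
Qed.

Lemma ltn_expn_ceil_inv {R : realType} {d p : nat} {e : R} :
  (0 < d)%N -> 0 < e -> d%:R `^ e < p%:R -> (d < p ^ ceil_nat R (1 / e))%N.
Proof.
move=> d_gt0 e_gt0 dep; set n := ceil_nat R _.
have d_ge0 : 0 <= d%:R :> R by rewrite ler0n.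
have n_ge : 1 / e <= n%:R by apply: ceil_nat_ge; rewrite divr_gt0.
have n_neq0 : (n != 0)%R by rewrite -lt0n -(ltr0n R) (lt_le_trans _ n_ge) ?divr_gt0.
rewrite -(ltr_nat R) natrX; apply: (@le_lt_trans _ _ (d%:R `^ (e * n%:R))).
  rewrite -{1}(powRr1 d_ge0) ler_powR ?ler1n //.
  by rewrite -ler_pdivrMl // mulrC.
by rewrite powRrM powR_mulrn ?powR_ge0 // ltrXn2r ?powR_ge0.
Qed.

Lemma mul_sq_lt_double {R : realType} {c d k p : nat} {eps gam : R} :
  (0 < d)%N -> 0 < gam ->
  (2^-1 * c%:R) `^ (1 / gam) <= d%:R -> k%:R <= d%:R `^ eps ->
  d%:R `^ (2 * eps + gam) < p%:R -> (c * (k * k) < 2 * p)%N.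
Proof.
move=> d_gt0 gam_gt0 cd kd dp.
have d_neq0 : (d%:R == 0 :> R) = false by rewrite pnatr_eq0 gtn_eqF.
have c_le : 2^-1 * c%:R <= d%:R `^ gam.
  have := ge0_ler_powR (ltW gam_gt0) _ _ cd.
  rewrite -powRrM mul1r mulVf ?gt_eqF // powRr1 ?mulr_ge0 ?invr_ge0 ?ler0n //.
  by apply; rewrite nnegrE ?powR_ge0.
have kk_le : k%:R * k%:R <= d%:R `^ (2 * eps) :> R.
  rewrite mulr2n mulrDl mul1r powRD ?d_neq0 ?implybT //.
  by apply: ler_pM; rewrite ?ler0n.
have := ler_pM _ _ c_le kk_le; rewrite -powRD ?d_neq0 ?implybT // addrC.
rewrite !mulr_ge0 ?invr_ge0 ?ler0n // => /(_ isT isT) ckd.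
by rewrite -(ltr_nat R) !natrM; lra.
Qed.

Lemma base_digits_inj {p n m1 m2 : nat} :
  (1 < p)%N -> (m1 < p ^ n)%N -> (m2 < p ^ n)%N ->
  (forall j, (j < n)%N -> base_digit p m1 j.+1 = base_digit p m2 j.+1) ->
  m1 = m2.
Proof.
rewrite /base_digit /= => p_gt1; elim: n m1 m2 => [|n IHn] m1 m2.
  by rewrite expn0 !ltnS !leqn0 => /eqP -> /eqP ->.
move=> m1_lt m2_lt eq_digits.
have p_gt0 : (0 < p)%N by apply: ltnW.
rewrite (divn_eq m1 p) (divn_eq m2 p).
have := eq_digits 0%N isT; rewrite !expn0 !divn1 => ->; congr (_ * _ + _)%N.
apply: IHn; rewrite ?ltn_divLR // -?expnSr // => j lt_jn.
by have := eq_digits j.+1 lt_jn; rewrite expnS !divnMA.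
Qed.

Definition digit_poly (p n m : nat) : {poly 'F_p} :=
  \poly_(l < n) (base_digit p m l.+1)%:R.

Lemma digit_poly_inj {p n m1 m2 : nat} : prime p ->
  (m1 < p ^ n)%N -> (m2 < p ^ n)%N -> digit_poly p n m1 = digit_poly p n m2 ->
  m1 = m2.
Proof.
move=> p_prime m1_lt m2_lt eq_poly.
apply: (base_digits_inj (prime_gt1 p_prime) m1_lt m2_lt) => j lt_jn.
have := congr1 (fun q : {poly 'F_p} => nat_of_ord q`_j) eq_poly.
by rewrite !coef_poly lt_jn !val_Fp_nat // !modn_mod.
Qed.

Lemma hashH_Fp (R : realType) (d : nat) (e : R) (p a : nat) (i : 'I_d) :
  prime p ->
  (hashH R d e p a i)%:R =
    a%:R + (digit_poly p (ceil_nat R (1 / e)) i.+1).[a%:R] * a%:R :> 'F_p.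
Proof.
move=> p_prime; rewrite /hashH Fp_nat_mod // natrD horner_poly mulr_suml.
rewrite big_add1 big_mkord natr_sum; congr (_ + _); apply: eq_bigr => l _.
by rewrite natrM natrX exprSr mulrC mulrA.
Qed.

Lemma exists_nonroot {F : finIdomainType} {q : {poly F}} :
  q != 0 -> (size q <= #|F|)%N -> exists x, ~~ root q x.
Proof.
move=> q_neq0 q_small; apply/existsP; apply: contraLR q_small.
rewrite negb_exists -ltnNge cardE => /forallP all_roots.
apply: max_poly_roots; rewrite ?enum_uniq //; apply/allP => x _; exact/negPn/all_roots.
Qed.

Definition lt_pairs {d : nat} (S : {set 'I_d}) : {set 'I_d * 'I_d} :=
  [set ij : 'I_d * 'I_d | [&& (ij.1 < ij.2)%N, ij.1 \in S & ij.2 \in S]].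

Lemma card_lt_pairs {d : nat} (S : {set 'I_d}) :
  (2 * #|lt_pairs S| <= #|S| * #|S|)%N.
Proof.
pose swap (ij : 'I_d * 'I_d) := (ij.2, ij.1).
have swap_inj : injective swap by move=> [i j] [i' j'] [-> ->].
have disjoint_swap : [disjoint lt_pairs S & swap @: lt_pairs S].
  rewrite -setI_eq0; apply/eqP/setP => -[i j]; rewrite !inE.
  apply/negP => /andP[/and3P[/= lt_ij _ _]] /imsetP[[i' j']].
  rewrite inE /= => /and3P[lt_ij' _ _] [eq_i eq_j].
  by move: lt_ij; rewrite eq_i eq_j ltnNge ltnW.
have sub_SS : lt_pairs S :|: swap @: lt_pairs S \subset finset.setX S S.
  apply/fintype.subsetP => -[i j]; rewrite !inE => /orP[/and3P[_ -> ->] //|].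
  by case/imsetP => -[i' j']; rewrite inE => /and3P[_ ? ?] [-> ->]; apply/andP.
have := subset_leq_card sub_SS.
by rewrite cardsX cardsU (disjoint_setI0 disjoint_swap) cards0 subn0 card_imset // addnn -mul2n.
Qed.

Lemma hashH_injective_on {R : realType} {d : nat} {e : R} {p : nat}
    (S : {set 'I_d}) :
  prime p -> (d < p ^ ceil_nat R (1 / e))%N ->
  (ceil_nat R (1 / e) * #|lt_pairs S| < p)%N ->
  exists2 a, (a < p)%N & {in S &, injective (hashH R d e p a)}.
Proof.
move=> p_prime d_lt; set n := ceil_nat R _ => pairs_lt.
pose Q (ij : 'I_d * 'I_d) :=
  (digit_poly p n ij.1.+1 - digit_poly p n ij.2.+1) * 'X.
have Q_neq0 ij : ij \in lt_pairs S -> Q ij != 0.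
  case: ij => i j; rewrite inE /= => /and3P[lt_ij _ _].
  rewrite mulf_neq0 ?polyX_eq0 // subr_eq0; apply/eqP.
  move=> /(digit_poly_inj p_prime (leq_ltn_trans (ltn_ord i) d_lt)).
  by move=> /(_ (leq_ltn_trans (ltn_ord j) d_lt)) [eq_ij]; rewrite eq_ij ltnn in lt_ij.
have size_Q ij : (size (Q ij) <= n.+1)%N.
  apply: leq_trans (size_polyMleq _ _) _; rewrite size_polyX addn2 ltnS.
  by apply: leq_trans (size_polyD _ _) _; rewrite size_polyN geq_max !size_poly.
pose P := \prod_(ij in lt_pairs S) Q ij.
have P_neq0 : P != 0 by apply/prodf_neq0.
have size_P : (size P <= #|'F_p|)%N.
  rewrite card_Fp //; apply: leq_trans (size_poly_prod_leq _ _) _.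
  have : (\sum_(ij in lt_pairs S) size (Q ij) <= #|lt_pairs S| * n.+1)%N.
    by rewrite -sum_nat_const; apply: leq_sum => ij _.
  by rewrite (_ : #|_| = #|lt_pairs S|) //; lia.
have [x Px] := exists_nonroot P_neq0 size_P.
have x_lt : (x < p)%N by rewrite -[X in (_ < X)%N](Fp_cast p_prime).
exists x => //.
have hashH_sub i j : (hashH R d e p x i)%:R - (hashH R d e p x j)%:R = (Q (i, j)).[x].
  rewrite !hashH_Fp // natr_Zp /Q hornerMX hornerD hornerN.
  by rewrite opprD addrACA subrr add0r mulrBl.
have hashH_lt_neq i j : i \in S -> j \in S -> (i < j)%N ->
    hashH R d e p x i != hashH R d e p x j.
  move=> iS jS lt_ij; have Qx : (Q (i, j)).[x] != 0.
    move: Px; rewrite /root horner_prod => /prodf_neq0; apply.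
    by rewrite inE /= lt_ij iS jS.
  by apply: contraNneq Qx => eq_h; rewrite -hashH_sub eq_h subrr.
move=> i j iS jS eq_h; apply: val_inj; case: (ltngtP i j) => // [lt_ij|lt_ji].
- by move: (hashH_lt_neq i j iS jS lt_ij); rewrite eq_h eqxx.
- by move: (hashH_lt_neq j i jS iS lt_ji); rewrite eq_h eqxx.
Qed.

Theorem lemmaF9 (R : realType) (d : nat) (eps gam : R) (p : nat) :
  (0 < d)%N ->
  0 < eps < 1 -> 0 < gam < 1 ->
  (2^-1 * (ceil_nat R (1 / (2 * eps + gam)))%:R) `^ (1 / gam) <= d%:R ->
  smallest_prime_above R p (d%:R `^ (2 * eps + gam)) ->
  forall x : 'I_d -> R,
    (#|[set i | x i != 0]|)%:R <= d%:R `^ eps ->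
    exists h : 'I_d -> nat,
      in_hfam R d (2 * eps + gam) p h /\
      (forall i j : 'I_d, i != j -> x i != 0 -> x j != 0 -> h i != h j).
Proof.
move=> d_gt0 /andP[eps_gt0 _] /andP[gam_gt0 _] ceil_le [p_prime dp _] x supp_le.
set S := [set i | x i != 0] in supp_le.
have e_gt0 : 0 < 2 * eps + gam by rewrite addr_gt0 ?mulr_gt0.
set n := ceil_nat R _ in ceil_le.
have nkk_lt := mul_sq_lt_double d_gt0 gam_gt0 ceil_le supp_le dp.
have pairs_lt : (n * #|lt_pairs S| < p)%N.
  rewrite -(ltn_pmul2l (isT : 0 < 2)%N) (leq_ltn_trans _ nkk_lt) //.
  by rewrite mulnCA leq_mul2l card_lt_pairs orbT.
have [a a_lt h_inj] :=
  hashH_injective_on S p_prime (ltn_expn_ceil_inv d_gt0 e_gt0 dp) pairs_lt.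
exists (hashH R d (2 * eps + gam) p a); split; first by exists a.
move=> i j neq_ij xi xj; apply: contra_neq neq_ij; apply: h_inj; by rewrite inE.
Qed.
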